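(* Consider the action of the translation subgroup $\mathbb{R}^3\subset SE(3)$ on $\mathbb{R}^6$ with coordinates $(\boldsymbol{\omega},\mathbf{v})=(\omega_1,\omega_2,\omega_3,v_1,v_2,v_3)$ given by $\mathbf{r}\cdot(\boldsymbol{\omega},\mathbf{v})=(\boldsymbol{\omega},\ \mathbf{r}\times\boldsymbol{\omega}+\mathbf{v})$. Then $\{\omega_1,\omega_2,\omega_3,\ \boldsymbol{\omega}\cdot\mathbf{v}\}$ is a SAGBI basis, with respect to the lexicographic order $\omega_1>\omega_2>\omega_3>v_1>v_2>v_3$, for the algebra $\mathbb{R}[\omega_1,\dots,v_3]^{\mathbb{R}^3}$ of polynomials invariant under this action; in particular it generates that algebra.
   Context: A SAGBI basis of a subalgebra $A$ of a polynomial ring, with respect to a term order, is a subset $S\subseteq A$ such that the leading monomial of every nonzero $f\in A$ is a product of leading monomials of elements of $S$. *)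

(* Multivariate polynomials are not available as a library,
   so R[w1,w2,w3,v1,v2,v3] is modelled as the iterated univariate polynomial
   ring R[v3][v2][v1][w3][w2][w1] (outermost variable = w1). *)
From HB Require Import structures.
From mathcomp Require Import all_boot all_order all_algebra.
Set Implicit Arguments. Unset Strict Implicit. Unset Printing Implicit Defensive.
Import Order.TTheory GRing.Theory Num.Theory.
Local Open Scope ring_scope.

Section SE3.
Variable R : realFieldType.

Definition T1 := {poly R}.
Definition T2 := {poly T1}.
Definition T3 := {poly T2}.
Definition T4 := {poly T3}.
Definition T5 := {poly T4}.
Definition P6 := {poly T5}.

Definition Xw1 : P6 := 'X.
Definition Xw2 : P6 := ('X : T5)%:P.
Definition Xw3 : P6 := ('X : T4)%:P%:P.
Definition Xv1 : P6 := ('X : T3)%:P%:P%:P.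
Definition Xv2 : P6 := ('X : T2)%:P%:P%:P%:P.
Definition Xv3 : P6 := ('X : T1)%:P%:P%:P%:P%:P.

Definition Xwv : P6 := Xw1 * Xv1 + Xw2 * Xv2 + Xw3 * Xv3.

(* evaluation of p at (a1,a2,a3,b1,b2,b3) = (w1,w2,w3,v1,v2,v3) *)
Definition ev (p : P6) (a1 a2 a3 b1 b2 b3 : R) : R :=
  ((((( p.[(a1 : R)%:P%:P%:P%:P%:P : T5] ).[(a2 : R)%:P%:P%:P%:P : T4])
      .[(a3 : R)%:P%:P%:P : T3]).[(b1 : R)%:P%:P : T2]).[(b2 : R)%:P : T1]).[b3].

(* invariance under the translation action r.(w,v) = (w, r x w + v) *)
Definition translation_invariant (p : P6) : Prop :=
  forall r1 r2 r3 a1 a2 a3 b1 b2 b3 : R,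
    ev p a1 a2 a3 (r2 * a3 - r3 * a2 + b1) (r3 * a1 - r1 * a3 + b2)
         (r1 * a2 - r2 * a1 + b3)
    = ev p a1 a2 a3 b1 b2 b3.

(* monomials: exponent vectors [:: e_w1; e_w2; e_w3; e_v1; e_v2; e_v3] *)
Definition lmS (A : nzRingType) (lmA : A -> seq nat) (p : {poly A}) : seq nat :=
  (size p).-1 :: lmA (lead_coef p).
Definition lm0 (_ : R) : seq nat := [::].
Definition lm1 : T1 -> seq nat := lmS lm0.
Definition lm2 : T2 -> seq nat := lmS lm1.
Definition lm3 : T3 -> seq nat := lmS lm2.
Definition lm4 : T4 -> seq nat := lmS lm3.
Definition lm5 : T5 -> seq nat := lmS lm4.
(* leading monomial for lex order w1 > w2 > w3 > v1 > v2 > v3 *)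
Definition lm : P6 -> seq nat := lmS lm5.

Definition mmul (s t : seq nat) : seq nat := map (fun x => x.1 + x.2) (zip s t).
Definition mone : seq nat := nseq 6 0.

Definition sagbi_basis (A : P6 -> Prop) (S : seq P6) : Prop :=
  (forall s, s \in S -> A s) /\
  (forall f, A f -> f != 0 ->
     exists ks : seq P6, all (fun k => k \in S) ks /\
       lm f = foldr mmul mone (map lm ks)).

Inductive generated (S : seq P6) : P6 -> Prop :=
| gen_const c : generated S (c%:P%:P%:P%:P%:P%:P)
| gen_elem s : s \in S -> generated S s
| gen_add p q : generated S p -> generated S q -> generated S (p + q)
| gen_mul p q : generated S p -> generated S q -> generated S (p * q).

End SE3.

From HB Require Import structures.
From mathcomp Require Import all_boot all_order all_algebra ring.
Set Implicit Arguments. Unset Strict Implicit. Unset Printing Implicit Defensive.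
Import Order.TTheory GRing.Theory Num.Theory.
Local Open Scope ring_scope.

(* When w1 <> 0 a
   translation moves v to ((w.v)/w1, 0, 0), so f is determined by
   g(w, x) = f(w, x, 0, 0) in R[w][x].  Moving v = (0, y, 0) the same way gives
   f(w, 0, y, 0) = g(w, w2 y / w1); comparing coefficients of y^k shows that
   w1^k divides the k-th coefficient g_k = F_k w1^k, whence
   f = sum_k F_k(w) (w.v)^k.  This expansion gives generation.  The term
   F_k (w.v)^k has leading monomial lm(F_k) + k (e_w1 + e_v1); these differ in
   their v1-exponent, so lm f is one of them, a product of the leading
   monomials w1, w2, w3 and w1 v1 of the generators. *)

(** * Ring morphisms out of polynomial rings *)

Definition horner_rmorph (A : nzSemiRingType) (S : comNzSemiRingType)
  (k : {rmorphism A -> S}) (u : S) : {rmorphism {poly A} -> S} :=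
  horner_morph (fun a => mulrC u (k a)).

Lemma horner_rmorphC (A : nzSemiRingType) (S : comNzSemiRingType)
  (k : {rmorphism A -> S}) u a : horner_rmorph k u a%:P = k a.
Proof. exact: horner_morphC. Qed.

Lemma horner_rmorphX (A : nzSemiRingType) (S : comNzSemiRingType)
  (k : {rmorphism A -> S}) u : horner_rmorph k u 'X = u.
Proof. exact: horner_morphX. Qed.

(* [map_polyC] and [coef_map] restated for rmorphisms: their right-hand sides
   then use the rmorphism coercion, and match the rmorphism lemmas below. *)
Lemma map_rmorphC (A B : nzSemiRingType) (f : {rmorphism A -> B}) a :
  map_poly f a%:P = (f a)%:P.
Proof. exact: map_polyC. Qed.

Lemma coef_map_rmorph (A B : nzSemiRingType) (f : {rmorphism A -> B}) p i :
  (map_poly f p)`_i = f p`_i.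
Proof. exact: coef_map. Qed.

(* Composites of rmorphisms on the iterated polynomial rings are slow to
   elaborate, so extensionality is stated for plain functions with the
   semiring morphism laws. *)
Definition semiring_morph (A S : pzSemiRingType) (f : A -> S) :=
  [/\ {morph f : x y / x + y}, {morph f : x y / x * y} & f 0 = 0].

Lemma rmorph_semiring_morph (A S : pzSemiRingType) (f : {rmorphism A -> S}) :
  semiring_morph f.
Proof. by split=> [x y|x y|]; rewrite ?rmorphD ?rmorphM ?rmorph0. Qed.

Lemma semiring_morph_polyC (A : nzSemiRingType) (S : pzSemiRingType)
    (f : {poly A} -> S) :
  semiring_morph f -> semiring_morph (fun a => f a%:P).
Proof. by case=> fD fM f0; split=> [x y|x y|] /=; rewrite ?polyCD ?polyCM ?fD ?fM. Qed.

Lemma semiring_morph_poly_ext (A : nzSemiRingType) (S : pzSemiRingType)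
    (f g : {poly A} -> S) : semiring_morph f -> semiring_morph g ->
  (forall a, f a%:P = g a%:P) -> f 'X = g 'X -> f =1 g.
Proof.
case=> fD fM f0 [gD gM g0] fgC fgX; elim/poly_ind => [|p c IH]; first by rewrite f0 g0.
by rewrite fD gD fM gM IH fgX fgC.
Qed.

Lemma rmorph_poly_ind (A B : nzSemiRingType) (phi : {rmorphism {poly A} -> B})
    (G : B -> Prop) :
  (forall x y, G x -> G y -> G (x + y)) -> (forall x y, G x -> G y -> G (x * y)) ->
  G (phi 'X) -> (forall a, G (phi a%:P)) -> forall p, G (phi p).
Proof.
move=> GD GM GX GC; elim/poly_ind => [|p c IH]; first by rewrite -polyC0.
by rewrite rmorphD rmorphM; apply: GD; [apply: GM|].
Qed.

Lemma drop_polyMXn (A : idomainType) (g h : {poly A}) (z : A) k : z != 0 ->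
  h * 'X^k = g * (z ^+ k)%:P -> g = drop_poly k g * 'X^k.
Proof.
move=> z_neq0 hg; rewrite -{1}(poly_take_drop k g) [take_poly k g](_ : _ = 0) ?add0r //.
apply/polyP => i; rewrite coef_take_poly coef0; case: ifP => // ik.
have /eqP := congr1 (fun p : {poly A} => p`_i) hg; rewrite /= coefMXn ik coefMC eq_sym.
by rewrite mulf_eq0 expf_eq0 (negPf z_neq0) andbF orbF => /eqP.
Qed.

(** * Polynomials as functions of points *)

Section PointEvaluation.
Variable R : numDomainType.

Lemma eq_poly_nonzero_horner (p q : {poly R}) :
  (forall c, c != 0 -> p.[c] = q.[c]) -> p = q.
Proof.
move=> pq; apply/eqP; rewrite -subr_eq0; apply: contraT => nz.
have := max_poly_roots nz (rs := [seq i.+1%:R | i <- iota 0 (size (p - q))]).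
rewrite size_map size_iota ltnn; apply.
  apply/allP => _ /mapP [i _ ->]; apply/rootP.
  by rewrite hornerD hornerN pq ?subrr ?pnatr_eq0.
rewrite map_inj_uniq ?iota_uniq // => i j.
by move/eqP; rewrite eqr_nat => /eqP [].
Qed.

Lemma coef_horner_scale (G H : {poly R}) c :
  (forall y, H.[y] = G.[c * y]) -> forall k, H`_k = G`_k * c ^+ k.
Proof.
move=> HG; have -> : H = \poly_(i < size G) (G`_i * c ^+ i).
  apply: eq_poly_nonzero_horner => y _; rewrite HG horner_poly horner_coef.
  by apply: eq_bigr => i _; rewrite exprMn mulrA.
by move=> k; rewrite coef_poly; case: ltnP => // hk; rewrite nth_default ?mul0r.
Qed.

Definition separating (A : pzSemiRingType) n (E : seq R -> {rmorphism A -> R}) :=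
  forall a b : A, (forall e, size e = n -> E e a = E e b) -> a = b.

Definition eval_id (e : seq R) : {rmorphism R -> R} := idfun.

Lemma separating_eval_id : separating 0 eval_id.
Proof. by move=> a b /(_ [::] erefl). Qed.

Section EvalPoly.
Variables (A : nzSemiRingType) (E : seq R -> {rmorphism A -> R}).

(* The point [c :: e] evaluates the outermost variable at [c], the others at [e]. *)
Definition eval_poly (e : seq R) : {rmorphism {poly A} -> R} :=
  horner_rmorph (E (behead e)) (head 0 e).

Lemma eval_polyE c e p : eval_poly (c :: e) p = (map_poly (E e) p).[c].
Proof. by []. Qed.

Lemma eval_polyC e a : eval_poly e a%:P = E (behead e) a.
Proof. exact: horner_rmorphC. Qed.

Lemma eval_polyX e : eval_poly e 'X = head 0 e.
Proof. exact: horner_rmorphX. Qed.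

Lemma eval_poly_horner c e (x : A) p :
  E e x = c -> eval_poly (c :: e) p = E e p.[x].
Proof. by move=> <-; rewrite eval_polyE horner_map. Qed.

Lemma eval_poly_nonzero_inj n : separating n E -> forall p q : {poly A},
  (forall c e, size e = n -> c != 0 -> eval_poly (c :: e) p = eval_poly (c :: e) q) ->
  p = q.
Proof.
move=> sepE p q pq; apply/polyP => i; apply: sepE => e se.
have epq : map_poly (E e) p = map_poly (E e) q.
  by apply: eq_poly_nonzero_horner => c nc; rewrite -!eval_polyE pq.
by rewrite -!(coef_map (E e)) epq.
Qed.

Lemma separating_eval_poly n : separating n E -> separating n.+1 eval_poly.
Proof.
move=> sepE p q pq; apply: (eval_poly_nonzero_inj sepE) => c e se _.
by apply: pq; rewrite /= se.
Qed.

End EvalPoly.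
End PointEvaluation.

(** * Leading monomials *)

(* [lmS], over semirings: the generators of [P6] are typed with the
   semiring instances of [{poly _}], which unify with those of [lmS] only at
   great cost.  The two agree by conversion ([lm_lmP] below). *)
Definition lm_poly (A : nzSemiRingType) (lmA : A -> seq nat) (p : {poly A}) : seq nat :=
  (size p).-1 :: lmA (lead_coef p).

Local Notation "s <lex t" := ((s : seqlexi nat) < t)%O (at level 70, no associativity).

Definition lm_add_dominant (A : nzSemiRingType) (lmA : A -> seq nat) := forall p q : A,
  p != 0 -> lmA q <lex lmA p -> p + q != 0 /\ lmA (p + q) = lmA p.

Definition lm_multiplicative (A : nzSemiRingType) (lmA : A -> seq nat) := forall p q : A,
  p != 0 -> q != 0 -> p * q != 0 /\ lmA (p * q) = mmul (lmA p) (lmA q).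

Lemma lm_add_dominant_lm_poly (A : nzSemiRingType) (lmA : A -> seq nat) :
  lm_add_dominant lmA -> lm_add_dominant (lm_poly lmA).
Proof.
move=> domA p q p_neq0; have [-> _|q_neq0] := eqVneq q 0; first by rewrite addr0.
have sp : (0 < size p)%N by rewrite size_poly_gt0.
have sq : (0 < size q)%N by rewrite size_poly_gt0.
rewrite /lm_poly ltxi_cons !leEnat; case: ltngtP => //= [lt_qp _ | eq_qp lt_lc].
  have {}lt_qp : (size q < size p)%N by rewrite -(prednK sp) -(prednK sq).
  rewrite size_polyDl // lead_coefDl //; split => //.
  by rewrite -size_poly_eq0 size_polyDl // -lt0n.
have {}eq_qp : size q = size p by rewrite -(prednK sq) -(prednK sp) eq_qp.
have lp_neq0 : lead_coef p != 0 by rewrite lead_coef_eq0.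
have [lc_neq0 lm_lc] := domA _ _ lp_neq0 lt_lc.
have coef_top : (p + q)`_(size p).-1 = lead_coef p + lead_coef q.
  by rewrite coefD /lead_coef eq_qp.
have size_pq : size (p + q) = size p.
  apply/eqP; rewrite eqn_leq (leq_trans (size_polyD _ _)) ?eq_qp ?maxnn //=.
  rewrite -(prednK sp) ltnNge; apply/negP => /(nth_default 0) top0.
  by move: lc_neq0; rewrite -coef_top [_`__]top0 eqxx.
have lc_pq : lead_coef (p + q) = lead_coef p + lead_coef q.
  by rewrite /lead_coef size_pq -coef_top.
by rewrite -size_poly_eq0 size_pq -lt0n sp lc_pq lm_lc.
Qed.

Lemma lm_multiplicative_lm_poly (A : nzSemiRingType) (lmA : A -> seq nat) :
  lm_multiplicative lmA -> lm_multiplicative (lm_poly lmA).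
Proof.
move=> mulA p q p_neq0 q_neq0.
have lp_neq0 : lead_coef p != 0 by rewrite lead_coef_eq0.
have lq_neq0 : lead_coef q != 0 by rewrite lead_coef_eq0.
have [lc_neq0 lm_lc] := mulA _ _ lp_neq0 lq_neq0.
have sp : (0 < size p)%N by rewrite size_poly_gt0.
have sq : (0 < size q)%N by rewrite size_poly_gt0.
rewrite /lm_poly size_proper_mul // lead_coef_proper_mul // lm_lc; split.
  by rewrite -size_poly_eq0 size_proper_mul // -(prednK sp) -(prednK sq) addSn addnS.
by rewrite -{1}(prednK sp) -{1}(prednK sq) addSn /= addnS.
Qed.

Lemma lm_sum_distinct (A : nzSemiRingType) (lmA : A -> seq nat) (t : nat -> A) N :
  lm_add_dominant lmA ->
  (forall i j, (i < j < N)%N -> t i != 0 -> t j != 0 -> lmA (t i) != lmA (t j)) ->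
  \sum_(k < N) t k = 0 \/
  exists k, [/\ (k < N)%N, t k != 0, \sum_(k < N) t k != 0 &
                lmA (\sum_(k < N) t k) = lmA (t k)].
Proof.
move=> domA; elim: N => [|N IH] distinct; first by left; rewrite big_ord0.
have distinctN i j : (i < j < N)%N -> t i != 0 -> t j != 0 -> lmA (t i) != lmA (t j).
  by case/andP=> lt_ij lt_jN; apply: distinct; rewrite lt_ij ltnS (ltnW lt_jN).
case: (IH distinctN) => [sum0|[k [lt_kN tk_neq0 sum_neq0 lm_sum]]].
  rewrite big_ord_recr /= sum0 add0r.
  by have [->|tN_neq0] := eqVneq (t N) 0; [left | right; exists N].
rewrite big_ord_recr /=; have [->|tN_neq0] := eqVneq (t N) 0.
  by right; exists k; rewrite addr0 ltnS (ltnW lt_kN).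
have lm_neq : lmA (\sum_(i < N) t i) != lmA (t N).
  by rewrite lm_sum; apply: distinct; rewrite ?lt_kN ?ltnSn.
have [lt_sum|lt_tN] := orP (@lt_total _ (seqlexi nat) _ _ lm_neq); right.
  have [sum_neq0' lm_sum'] := domA _ _ tN_neq0 lt_sum.
  by exists N; rewrite addrC.
have [sum_neq0' lm_sum'] := domA _ _ sum_neq0 lt_tN.
by exists k; rewrite ltnS (ltnW lt_kN) lm_sum' lm_sum.
Qed.

Lemma lm_expr (A : nzSemiRingType) (lmA : A -> seq nat) (x : A) k :
  lm_multiplicative lmA -> x != 0 ->
  x ^+ k != 0 /\ lmA (x ^+ k) = iter k (mmul (lmA x)) (lmA 1).
Proof.
move=> mulA x_neq0; elim: k => [|k [xk_neq0 lm_xk]] /=; first by rewrite expr0 oner_neq0.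
by have [? lm_x] := mulA _ _ x_neq0 xk_neq0; rewrite exprS lm_x lm_xk.
Qed.

Lemma lm_poly_polyC (A : nzSemiRingType) (lmA : A -> seq nat) a :
  lm_poly lmA a%:P = 0%N :: lmA a.
Proof. by rewrite /lm_poly size_polyC lead_coefC; case: (a != 0). Qed.

Lemma lm_poly_polyX (A : nzSemiRingType) (lmA : A -> seq nat) :
  lm_poly lmA 'X = 1%N :: lmA 1.
Proof. by rewrite /lm_poly size_polyX lead_coefX. Qed.

Lemma lm_poly_poly1 (A : nzSemiRingType) (lmA : A -> seq nat) :
  lm_poly lmA 1 = 0%N :: lmA 1.
Proof. by rewrite /lm_poly size_poly1 lead_coef1. Qed.

Lemma lm_poly_map_inj (A B : nzSemiRingType) (f : {rmorphism A -> B})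
    (lmA : A -> seq nat) (lmB : B -> seq nat) z :
  injective f -> (forall a, lmB (f a) = lmA a ++ z) ->
  forall p, lm_poly lmB (map_poly f p) = lm_poly lmA p ++ z.
Proof.
move=> f_inj lm_f p; rewrite /lm_poly size_map_inj_poly ?rmorph0 //.
by rewrite lead_coef_map_inj ?rmorph0 // lm_f.
Qed.

Lemma lm_add_dominant_lm0 (R : realFieldType) : lm_add_dominant (@lm0 R).
Proof. by []. Qed.

Lemma lm_multiplicative_lm0 (R : realFieldType) : lm_multiplicative (@lm0 R).
Proof. by move=> p q p_neq0 q_neq0; rewrite mulf_neq0. Qed.

Lemma foldr_nseq (T S : Type) (f : T -> S -> S) r c u :
  foldr f r (nseq c u) = iter c (f u) r.
Proof. by elim: c => //= c ->. Qed.

Lemma iter_mmul6 c u1 u2 u3 u4 u5 u6 x1 x2 x3 x4 x5 x6 :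
  iter c (mmul [:: u1; u2; u3; u4; u5; u6]) [:: x1; x2; x3; x4; x5; x6] =
  [:: c * u1 + x1; c * u2 + x2; c * u3 + x3; c * u4 + x4; c * u5 + x5; c * u6 + x6]%N.
Proof.
elim: c => [|c IH] /=; first by rewrite !mul0n !add0n.
by rewrite IH; congr [:: _; _; _; _; _; _]; rewrite mulSn -addnA.
Qed.

(** * The ring R[w, v] and its subring R[w] *)

Section Towers.
Variable R : realFieldType.
Local Notation P := (P6 R).

Definition eval6 : seq R -> {rmorphism P -> R} :=
  eval_poly (A := T5 R) (eval_poly (A := T4 R) (eval_poly (A := T3 R)
    (eval_poly (A := T2 R) (eval_poly (A := T1 R) (eval_poly (A := R) (@eval_id R)))))).

Lemma eval6C e (c : R) : eval6 e c%:P%:P%:P%:P%:P%:P = c.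
Proof. by rewrite !eval_polyC. Qed.

Lemma ev_eval6 p a1 a2 a3 b1 b2 b3 :
  ev p a1 a2 a3 b1 b2 b3 = eval6 [:: a1; a2; a3; b1; b2; b3] p.
Proof.
rewrite /eval6 (eval_poly_horner (x := a1%:P%:P%:P%:P%:P)) ?eval_polyC //.
rewrite (eval_poly_horner (x := a2%:P%:P%:P%:P)) ?eval_polyC //.
rewrite (eval_poly_horner (x := a3%:P%:P%:P)) ?eval_polyC //.
rewrite (eval_poly_horner (x := b1%:P%:P)) ?eval_polyC //.
rewrite (eval_poly_horner (x := b2%:P)) ?eval_polyC //.
by rewrite (eval_poly_horner (x := b3)).
Qed.

Lemma eval6_Xw1 e : eval6 e (Xw1 R) = nth 0 e 0.
Proof. exact: eval_polyX. Qed.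
Lemma eval6_Xw2 e : eval6 e (Xw2 R) = nth 0 e 1.
Proof. by rewrite /eval6 /Xw2 eval_polyC eval_polyX; case: e => [|? []]. Qed.
Lemma eval6_Xw3 e : eval6 e (Xw3 R) = nth 0 e 2.
Proof. by rewrite /eval6 /Xw3 !eval_polyC eval_polyX; case: e => [|? [|? []]]. Qed.
Lemma eval6_Xv1 e : eval6 e (Xv1 R) = nth 0 e 3.
Proof. by rewrite /eval6 /Xv1 !eval_polyC eval_polyX; case: e => [|? [|? [|? []]]]. Qed.
Lemma eval6_Xv2 e : eval6 e (Xv2 R) = nth 0 e 4.
Proof. by rewrite /eval6 /Xv2 !eval_polyC eval_polyX; case: e => [|? [|? [|? [|? []]]]]. Qed.
Lemma eval6_Xv3 e : eval6 e (Xv3 R) = nth 0 e 5.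
Proof. by rewrite /eval6 /Xv3 !eval_polyC eval_polyX; case: e => [|? [|? [|? [|? [|? []]]]]]. Qed.

(* Rewriting with [rmorphM] under the concrete [eval6] does not terminate in
   reasonable time, hence this statement for an abstract [f]. *)
Lemma rmorph_Xwv (S : pzSemiRingType) (f : {rmorphism P -> S}) :
  f (Xwv R) = f (Xw1 R) * f (Xv1 R) + f (Xw2 R) * f (Xv2 R) + f (Xw3 R) * f (Xv3 R).
Proof. by rewrite 2!rmorphD; congr (_ + _ + _); exact: rmorphM. Qed.

Lemma eval6_Xwv a1 a2 a3 b1 b2 b3 :
  eval6 [:: a1; a2; a3; b1; b2; b3] (Xwv R) = a1 * b1 + a2 * b2 + a3 * b3.
Proof.
rewrite (rmorph_Xwv (eval6 _)); congr (_ * _ + _ * _ + _ * _).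
- exact: eval6_Xw1.
- exact: eval6_Xv1.
- exact: eval6_Xw2.
- exact: eval6_Xv2.
- exact: eval6_Xw3.
- exact: eval6_Xv3.
Qed.

Lemma semiring_morph_P6_ext (S : pzSemiRingType) (f g : P -> S) :
  semiring_morph f -> semiring_morph g ->
  (forall c : R, f c%:P%:P%:P%:P%:P%:P = g c%:P%:P%:P%:P%:P%:P) ->
  f (Xw1 R) = g (Xw1 R) -> f (Xw2 R) = g (Xw2 R) -> f (Xw3 R) = g (Xw3 R) ->
  f (Xv1 R) = g (Xv1 R) -> f (Xv2 R) = g (Xv2 R) -> f (Xv3 R) = g (Xv3 R) ->
  f =1 g.
Proof.
move=> mf mg fgC fg1 fg2 fg3 fg4 fg5 fg6.
apply: (semiring_morph_poly_ext mf mg _ fg1) => a.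
move: (semiring_morph_polyC mf) (semiring_morph_polyC mg) => {}mf {}mg.
apply: (semiring_morph_poly_ext mf mg _ fg2) => {}a.
move: (semiring_morph_polyC mf) (semiring_morph_polyC mg) => {}mf {}mg.
apply: (semiring_morph_poly_ext mf mg _ fg3) => {}a.
move: (semiring_morph_polyC mf) (semiring_morph_polyC mg) => {}mf {}mg.
apply: (semiring_morph_poly_ext mf mg _ fg4) => {}a.
move: (semiring_morph_polyC mf) (semiring_morph_polyC mg) => {}mf {}mg.
apply: (semiring_morph_poly_ext mf mg _ fg5) => {}a.
move: (semiring_morph_polyC mf) (semiring_morph_polyC mg) => {}mf {}mg.
exact: (semiring_morph_poly_ext mf mg fgC fg6).
Qed.

End Towers.

Section WSubring.
Variable R : realFieldType.
Local Notation P := (P6 R).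
Local Notation W := {poly {poly {poly R}}}.

Definition eval3 : seq R -> {rmorphism W -> R} :=
  eval_poly (A := {poly {poly R}})
    (eval_poly (A := {poly R}) (eval_poly (A := R) (@eval_id R))).

Lemma eval3C e (c : R) : eval3 e c%:P%:P%:P = c.
Proof. by rewrite !eval_polyC. Qed.

Definition incl3 : {rmorphism R -> T3 R} :=
  (@polyC (T2 R) \o @polyC (T1 R) \o @polyC R)%FUN.
Definition incl4 : {rmorphism {poly R} -> T4 R} := map_poly incl3.
Definition incl5 : {rmorphism {poly {poly R}} -> T5 R} := map_poly incl4.
Definition inclW : {rmorphism W -> P} := map_poly incl5.

Lemma incl3E c : incl3 c = c%:P%:P%:P. Proof. by []. Qed.
Lemma incl4E q : incl4 q = map_poly incl3 q. Proof. by []. Qed.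
Lemma incl5E q : incl5 q = map_poly incl4 q. Proof. by []. Qed.
Lemma inclWE q : inclW q = map_poly incl5 q. Proof. by []. Qed.

Lemma inclW_C (c : R) : inclW c%:P%:P%:P = c%:P%:P%:P%:P%:P%:P.
Proof. by rewrite inclWE map_rmorphC incl5E map_rmorphC incl4E map_rmorphC incl3E. Qed.

Lemma inclW_X1 : inclW 'X = Xw1 R.
Proof. by rewrite inclWE map_polyX. Qed.

Lemma inclW_X2 : inclW 'X%:P = Xw2 R.
Proof. by rewrite inclWE map_rmorphC incl5E map_polyX. Qed.

Lemma inclW_X3 : inclW 'X%:P%:P = Xw3 R.
Proof. by rewrite inclWE map_rmorphC incl5E map_rmorphC incl4E map_polyX. Qed.

Lemma semiring_morph_W_ext (S : pzSemiRingType) (f g : W -> S) :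
  semiring_morph f -> semiring_morph g ->
  (forall c : R, f c%:P%:P%:P = g c%:P%:P%:P) ->
  f 'X = g 'X -> f 'X%:P = g 'X%:P -> f 'X%:P%:P = g 'X%:P%:P -> f =1 g.
Proof.
move=> mf mg fgC fg1 fg2 fg3.
apply: (semiring_morph_poly_ext mf mg _ fg1) => a.
move: (semiring_morph_polyC mf) (semiring_morph_polyC mg) => {}mf {}mg.
apply: (semiring_morph_poly_ext mf mg _ fg2) => {}a.
move: (semiring_morph_polyC mf) (semiring_morph_polyC mg) => {}mf {}mg.
exact: (semiring_morph_poly_ext mf mg fgC fg3).
Qed.

Lemma eval6_inclW a1 a2 a3 b q :
  eval6 [:: a1, a2, a3 & b] (inclW q) = eval3 [:: a1; a2; a3] q.
Proof.
pose f q := eval6 [:: a1, a2, a3 & b] (inclW q); rewrite -/(f q).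
have mf : semiring_morph f by split=> [x y|x y|]; rewrite /f ?rmorphD ?rmorphM ?rmorph0.
apply: (semiring_morph_W_ext mf (rmorph_semiring_morph _)) => [c|||] {q}; rewrite /f.
- by rewrite inclW_C eval6C eval3C.
- by rewrite inclW_X1 eval6_Xw1 eval_polyX.
- by rewrite inclW_X2 eval6_Xw2 !eval_polyC eval_polyX.
- by rewrite inclW_X3 eval6_Xw3 !eval_polyC eval_polyX.
Qed.

End WSubring.

Section Substitution.
Variable R : realFieldType.
Local Notation P := (P6 R).
Local Notation W := {poly {poly {poly R}}}.
Local Notation Q := {poly W}.

Definition constQ : {rmorphism R -> Q} :=
  (@polyC W \o @polyC {poly {poly R}} \o @polyC {poly R} \o @polyC R)%FUN.

(* The substitution [w |-> w, v |-> (x1, x2, x3)] into [W[x]]. *)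
Definition subst_v (x1 x2 x3 : Q) : {rmorphism P -> Q} :=
  horner_rmorph (A := T5 R) (horner_rmorph (A := T4 R) (horner_rmorph (A := T3 R)
    (horner_rmorph (A := T2 R) (horner_rmorph (A := T1 R) (horner_rmorph (A := R)
      constQ x3) x2) x1) 'X%:P%:P%:P) 'X%:P%:P) 'X%:P.

Definition evalQ : seq R -> {rmorphism Q -> R} := eval_poly (@eval3 R).

Lemma eval6_subst_v (x1 x2 x3 : Q) a1 a2 a3 b1 b2 b3 y :
  evalQ [:: y; a1; a2; a3] x1 = b1 -> evalQ [:: y; a1; a2; a3] x2 = b2 ->
  evalQ [:: y; a1; a2; a3] x3 = b3 ->
  forall p,
  eval6 [:: a1; a2; a3; b1; b2; b3] p = evalQ [:: y; a1; a2; a3] (subst_v x1 x2 x3 p).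
Proof.
move=> e1 e2 e3; apply: semiring_morph_P6_ext.
- exact: rmorph_semiring_morph.
- by split=> [p q|p q|]; rewrite ?rmorphD ?rmorphM ?rmorph0.
- by move=> c; rewrite eval6C !horner_rmorphC.
- by rewrite eval6_Xw1 horner_rmorphX !horner_rmorphC horner_rmorphX.
- by rewrite eval6_Xw2 horner_rmorphC horner_rmorphX !horner_rmorphC horner_rmorphX.
- by rewrite eval6_Xw3 !horner_rmorphC horner_rmorphX !horner_rmorphC horner_rmorphX.
- by rewrite eval6_Xv1 !horner_rmorphC horner_rmorphX.
- by rewrite eval6_Xv2 !horner_rmorphC horner_rmorphX.
- by rewrite eval6_Xv3 !horner_rmorphC horner_rmorphX.
Qed.

Lemma eval6_subst_v1 (f : P) a1 a2 a3 y :
  eval6 [:: a1; a2; a3; y; 0; 0] f = evalQ [:: y; a1; a2; a3] (subst_v 'X 0 0 f).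
Proof. by apply: eval6_subst_v; rewrite ?eval_polyX ?rmorph0. Qed.

Lemma eval6_subst_v2 (f : P) a1 a2 a3 y :
  eval6 [:: a1; a2; a3; 0; y; 0] f = evalQ [:: y; a1; a2; a3] (subst_v 0 'X 0 f).
Proof. by apply: eval6_subst_v; rewrite ?eval_polyX ?rmorph0. Qed.

Lemma translation_invariant_reduce (f : P) a1 a2 a3 b1 b2 b3 :
  translation_invariant f -> a1 != 0 ->
  eval6 [:: a1; a2; a3; b1; b2; b3] f =
  eval6 [:: a1; a2; a3; (a1 * b1 + a2 * b2 + a3 * b3) / a1; 0; 0] f.
Proof.
move=> inv_f a1_neq0; rewrite -!ev_eval6.
(* The translation [r = (0, -b3/a1, b2/a1)] carries [((a.b)/a1, 0, 0)] to [b]. *)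
have := inv_f 0 (- b3 / a1) (b2 / a1) a1 a2 a3 ((a1 * b1 + a2 * b2 + a3 * b3) / a1) 0 0.
have -> : - b3 / a1 * a3 - b2 / a1 * a2 + (a1 * b1 + a2 * b2 + a3 * b3) / a1 = b1 by field.
have -> : b2 / a1 * a1 - 0 * a3 + 0 = b2 by field.
by have -> : 0 * a2 - - b3 / a1 * a1 + 0 = b3 by field.
Qed.

End Substitution.

(** * Invariants are polynomials in w and w.v *)

Section Expansion.
Variable R : realFieldType.
Local Notation P := (P6 R).
Local Notation W := {poly {poly {poly R}}}.

Lemma mulXn_eq_of_eval3 (g h : W) k :
  (forall a1 a2 a3, a1 != 0 ->
     eval3 [:: a1; a2; a3] h * a1 ^+ k = eval3 [:: a1; a2; a3] g * a2 ^+ k) ->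
  h * 'X^k = g * ('X ^+ k)%:P.
Proof.
move=> hg; apply: (eval_poly_nonzero_inj (n := 2)).
  by do 2! apply: separating_eval_poly; exact: separating_eval_id.
move=> c [|a2 [|a3 []]] // _ c_neq0.
by rewrite !rmorphM eval_polyC !rmorphXn !eval_polyX; apply: hg.
Qed.

Lemma subst_v_coef_rel (f : P) : translation_invariant f -> forall k,
  (subst_v 0 'X 0 f)`_k * 'X^k = (subst_v 'X 0 0 f)`_k * ('X ^+ k)%:P.
Proof.
move=> inv_f k; apply: mulXn_eq_of_eval3 => a1 a2 a3 a1_neq0.
set a := [:: a1; a2; a3].
have scale y : (map_poly (eval3 a) (subst_v 0 'X 0 f)).[y] =
               (map_poly (eval3 a) (subst_v 'X 0 0 f)).[a2 / a1 * y].
  rewrite -!eval_polyE -eval6_subst_v1 -eval6_subst_v2.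
  rewrite (translation_invariant_reduce a2 a3 0 y 0 inv_f a1_neq0).
  by have -> : (a1 * 0 + a2 * y + a3 * 0) / a1 = a2 / a1 * y by field.
have := coef_horner_scale scale k; rewrite !coef_map => ->.
by rewrite -mulrA -exprMn divfK.
Qed.

Lemma eval3_mulXn a e (q : W) k :
  eval3 (a :: e) (q * 'X^k) = eval3 (a :: e) q * a ^+ k.
Proof. by rewrite rmorphM rmorphXn eval_polyX. Qed.

Lemma rmorph_expansion (S : comPzSemiRingType) (f : {rmorphism P -> S})
    (u : nat -> P) x N :
  f (\sum_(k < N) u k * x ^+ k) = \sum_(k < N) f (u k) * f x ^+ k.
Proof. by rewrite rmorph_sum; apply: eq_bigr => k _; rewrite rmorphM rmorphXn. Qed.

Theorem translation_invariant_expansion (f : P) : translation_invariant f ->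
  exists (N : nat) (F : nat -> W), f = \sum_(k < N) inclW R (F k) * Xwv R ^+ k.
Proof.
move=> inv_f; set g := subst_v 'X 0 0 f.
pose F k := drop_poly k g`_k.
have gF k : g`_k = F k * 'X^k.
  by apply: drop_polyMXn (subst_v_coef_rel inv_f k); rewrite polyX_eq0.
exists (size g), F; apply: (eval_poly_nonzero_inj (n := 5)).
  by do 5! apply: separating_eval_poly; exact: separating_eval_id.
move=> a1 [|a2 [|a3 [|b1 [|b2 [|b3 []]]]]] //= _ a1_neq0.
change (eval6 [:: a1; a2; a3; b1; b2; b3] f =
        eval6 [:: a1; a2; a3; b1; b2; b3] (\sum_(k < size g) inclW R (F k) * Xwv R ^+ k)).
rewrite [RHS](rmorph_expansion _ (fun k => inclW R (F k))).
rewrite (translation_invariant_reduce a2 a3 b1 b2 b3 inv_f a1_neq0).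
rewrite eval6_subst_v1 eval_polyE (horner_coef_wide _ (size_poly _ _)).
apply: eq_bigr => k _; rewrite eval6_inclW eval6_Xwv coef_map_rmorph gF.
by rewrite (eval3_mulXn a1 [:: a2; a3] (F k) k) -mulrA -exprMn; congr (_ * _ ^+ _); field.
Qed.

End Expansion.

(** * Leading monomials of the expansion *)

Section GeneratorMonomials.
Variable R : realFieldType.
Local Notation P := (P6 R).
Local Notation W := {poly {poly {poly R}}}.

Definition lmP : P -> seq nat :=
  lm_poly (A := T5 R) (lm_poly (A := T4 R) (lm_poly (A := T3 R)
    (lm_poly (A := T2 R) (lm_poly (A := T1 R) (lm_poly (A := R) (@lm0 R)))))).

Definition lmW : W -> seq nat := lm_poly (lm_poly (lm_poly (@lm0 R))).

Lemma lm_lmP : @lm R =1 lmP.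
Proof. by []. Qed.

Lemma lm_add_dominant_lmP : lm_add_dominant lmP.
Proof. by do 6! apply: lm_add_dominant_lm_poly; exact: lm_add_dominant_lm0. Qed.

Lemma lm_multiplicative_lmP : lm_multiplicative lmP.
Proof. by do 6! apply: lm_multiplicative_lm_poly; exact: lm_multiplicative_lm0. Qed.

Lemma lmP1 : lmP 1 = mone.
Proof. by rewrite /lmP !lm_poly_poly1. Qed.

Lemma lmP_Xw1 : lmP (Xw1 R) = [:: 1; 0; 0; 0; 0; 0]%N.
Proof. by rewrite /lmP lm_poly_polyX !lm_poly_poly1. Qed.

Lemma lmP_Xw2 : lmP (Xw2 R) = [:: 0; 1; 0; 0; 0; 0]%N.
Proof. by rewrite /lmP lm_poly_polyC lm_poly_polyX !lm_poly_poly1. Qed.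

Lemma lmP_Xw3 : lmP (Xw3 R) = [:: 0; 0; 1; 0; 0; 0]%N.
Proof. by rewrite /lmP !lm_poly_polyC lm_poly_polyX !lm_poly_poly1. Qed.

Lemma lmP_Xv1 : lmP (Xv1 R) = [:: 0; 0; 0; 1; 0; 0]%N.
Proof. by rewrite /lmP !lm_poly_polyC lm_poly_polyX !lm_poly_poly1. Qed.

Lemma lmP_Xv2 : lmP (Xv2 R) = [:: 0; 0; 0; 0; 1; 0]%N.
Proof. by rewrite /lmP !lm_poly_polyC lm_poly_polyX !lm_poly_poly1. Qed.

Lemma lmP_Xv3 : lmP (Xv3 R) = [:: 0; 0; 0; 0; 0; 1]%N.
Proof. by rewrite /lmP !lm_poly_polyC lm_poly_polyX. Qed.

Lemma Xw1_neq0 : Xw1 R != 0. Proof. by rewrite /Xw1 polyX_eq0. Qed.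
Lemma Xw2_neq0 : Xw2 R != 0. Proof. by rewrite polyC_eq0 polyX_eq0. Qed.
Lemma Xw3_neq0 : Xw3 R != 0. Proof. by rewrite !polyC_eq0 polyX_eq0. Qed.
Lemma Xv1_neq0 : Xv1 R != 0. Proof. by rewrite !polyC_eq0 polyX_eq0. Qed.
Lemma Xv2_neq0 : Xv2 R != 0. Proof. by rewrite !polyC_eq0 polyX_eq0. Qed.
Lemma Xv3_neq0 : Xv3 R != 0. Proof. by rewrite !polyC_eq0 polyX_eq0. Qed.

Lemma lmP_Xwv : Xwv R != 0 /\ lmP (Xwv R) = [:: 1; 0; 0; 1; 0; 0]%N.
Proof.
have [m1_neq0 lm_m1] := lm_multiplicative_lmP Xw1_neq0 Xv1_neq0.
have [m2_neq0 lm_m2] := lm_multiplicative_lmP Xw2_neq0 Xv2_neq0.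
have [m3_neq0 lm_m3] := lm_multiplicative_lmP Xw3_neq0 Xv3_neq0.
have {}lm_m1 : lmP (Xw1 R * Xv1 R) = [:: 1; 0; 0; 1; 0; 0]%N.
  by rewrite lm_m1 (congr2 mmul lmP_Xw1 lmP_Xv1).
have {}lm_m2 : lmP (Xw2 R * Xv2 R) = [:: 0; 1; 0; 0; 1; 0]%N.
  by rewrite lm_m2 (congr2 mmul lmP_Xw2 lmP_Xv2).
have {}lm_m3 : lmP (Xw3 R * Xv3 R) = [:: 0; 0; 1; 0; 0; 1]%N.
  by rewrite lm_m3 (congr2 mmul lmP_Xw3 lmP_Xv3).
have lt12 : lmP (Xw2 R * Xv2 R) <lex lmP (Xw1 R * Xv1 R).
  by rewrite [X in X <lex _]lm_m2 [X in _ <lex X]lm_m1.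
have [m12_neq0 lm_m12] := lm_add_dominant_lmP m1_neq0 lt12.
have lt123 : lmP (Xw3 R * Xv3 R) <lex lmP (Xw1 R * Xv1 R + Xw2 R * Xv2 R).
  by rewrite [X in X <lex _]lm_m3 [X in _ <lex X]lm_m12 lm_m1.
have [m123_neq0 lm_m123] := lm_add_dominant_lmP m12_neq0 lt123.
by split; [exact: m123_neq0 | exact: etrans lm_m123 (etrans lm_m12 lm_m1)].
Qed.

Lemma incl3_inj : injective (incl3 R).
Proof. by move=> a b /polyC_inj/polyC_inj/polyC_inj. Qed.

Lemma incl4_inj : injective (incl4 R).
Proof. exact: map_inj_poly incl3_inj (rmorph0 _). Qed.

Lemma incl5_inj : injective (incl5 R).
Proof. exact: map_inj_poly incl4_inj (rmorph0 _). Qed.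

Lemma inclW_inj : injective (inclW R).
Proof. exact: map_inj_poly incl5_inj (rmorph0 _). Qed.

Lemma lmP_inclW q : lmP (inclW R q) = lmW q ++ [:: 0; 0; 0]%N.
Proof.
have lm3 a : lmW (incl3 R a) = @lm0 R a ++ [:: 0; 0; 0]%N.
  by rewrite incl3E /lmW !lm_poly_polyC.
exact: lm_poly_map_inj incl5_inj (lm_poly_map_inj incl4_inj
  (lm_poly_map_inj incl3_inj lm3)) q.
Qed.

Lemma lmP_term (q : W) k c1 c2 c3 : q != 0 -> lmW q = [:: c1; c2; c3] ->
  inclW R q * Xwv R ^+ k != 0 /\
  lmP (inclW R q * Xwv R ^+ k) = [:: c1 + k; c2; c3; k; 0; 0]%N.
Proof.
move=> q_neq0 lm_q; have [Xwv_neq0 lm_Xwv] := lmP_Xwv.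
have inclq_neq0 : inclW R q != 0 by rewrite -(rmorph0 (inclW R)) (inj_eq inclW_inj).
have [xk_neq0 lm_xk] := lm_expr k lm_multiplicative_lmP Xwv_neq0.
have [t_neq0 lm_t] := lm_multiplicative_lmP inclq_neq0 xk_neq0.
split=> //; rewrite lm_t lm_xk lm_Xwv lmP1 lmP_inclW lm_q iter_mmul6.
by rewrite /mmul /= !muln1 !muln0 !addn0 !addr0 !add0r.
Qed.

Lemma lmP_term_shape (q : W) k : inclW R q * Xwv R ^+ k != 0 ->
  exists c1 c2 c3, lmP (inclW R q * Xwv R ^+ k) = [:: c1 + k; c2; c3; k; 0; 0]%N.
Proof.
move=> t_neq0; have q_neq0 : q != 0.
  by apply: contraNneq t_neq0 => ->; rewrite rmorph0 mul0r.
have [c1 [c2 [c3 lm_q]]] : exists c1 c2 c3, lmW q = [:: c1; c2; c3] by do 3 eexists.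
by exists c1, c2, c3; case: (lmP_term k q_neq0 lm_q).
Qed.

End GeneratorMonomials.

(** * Generation and the SAGBI property *)

Section Generation.
Variables (R : realFieldType) (S : seq (P6 R)).

Lemma generated_natr n : generated S n%:R.
Proof. by have := @gen_const R S n%:R; rewrite !polyC_natr. Qed.

Lemma generated_expr x k : generated S x -> generated S (x ^+ k).
Proof.
move=> gen_x; elim: k => [|k IH]; first exact: (generated_natr 1).
by rewrite exprS; apply: gen_mul.
Qed.

Lemma generated_inclW q :
  Xw1 R \in S -> Xw2 R \in S -> Xw3 R \in S -> generated S (inclW R q).
Proof.
move=> S_w1 S_w2 S_w3; move: q.
apply: rmorph_poly_ind => [x y|x y||a]; [exact: gen_add | exact: gen_mul | |].
  by rewrite inclW_X1; apply: gen_elem.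
rewrite inclWE map_rmorphC.
apply: (rmorph_poly_ind (G := fun y => generated S y%:P)) => [x y|x y||b].
- by rewrite polyCD; exact: gen_add.
- by rewrite polyCM; exact: gen_mul.
- by rewrite incl5E map_polyX; apply: gen_elem.
rewrite incl5E map_rmorphC.
apply: (rmorph_poly_ind (G := fun z => generated S z%:P%:P)) => [x y|x y||c].
- by rewrite !polyCD; exact: gen_add.
- by rewrite !polyCM; exact: gen_mul.
- by rewrite incl4E map_polyX; apply: gen_elem.
by rewrite incl4E map_rmorphC incl3E; exact: gen_const.
Qed.

End Generation.

Section TranslationInvariants.
Variable R : realFieldType.
Local Notation S := [:: Xw1 R; Xw2 R; Xw3 R; Xwv R].

Lemma mem_generators : [/\ Xw1 R \in S, Xw2 R \in S, Xw3 R \in S & Xwv R \in S].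
Proof.
split; first exact: mem_head.
- by apply: mem_behead; exact: mem_head.
- by do 2! apply: mem_behead; exact: mem_head.
- by do 3! apply: mem_behead; exact: mem_head.
Qed.

Lemma translation_invariant_generators s : s \in S -> translation_invariant s.
Proof.
rewrite !inE => /or4P [] /eqP -> r1 r2 r3 a1 a2 a3 b1 b2 b3; rewrite !ev_eval6.
- by rewrite !eval6_Xw1.
- by rewrite !eval6_Xw2.
- by rewrite !eval6_Xw3.
- by rewrite !eval6_Xwv; ring.
Qed.

Lemma lm_basis_product c1 c2 c3 k :
  foldr mmul mone
    (map (@lm R) (nseq c1 (Xw1 R) ++ nseq c2 (Xw2 R) ++ nseq c3 (Xw3 R) ++ nseq k (Xwv R))) =
  [:: c1 + k; c2; c3; k; 0; 0]%N.
Proof.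
rewrite (eq_map (@lm_lmP R)) !map_cat !map_nseq lmP_Xw1 lmP_Xw2 lmP_Xw3 (lmP_Xwv R).2.
rewrite !foldr_cat !foldr_nseq !iter_mmul6.
by rewrite !muln1 !muln0 !addn0 !add0n.
Qed.

Theorem sagbi_translation_invariant : sagbi_basis (@translation_invariant R) S.
Proof.
split=> [|f inv_f f_neq0]; first exact: translation_invariant_generators.
have [N [F def_f]] := translation_invariant_expansion inv_f.
pose t k := inclW R (F k) * Xwv R ^+ k.
have {}def_f : f = \sum_(k < N) t k := def_f.
have lm_t k : t k != 0 -> exists c1 c2 c3, lmP (t k) = [:: c1 + k; c2; c3; k; 0; 0]%N.
  exact: lmP_term_shape.
have distinct i j : (i < j < N)%N -> t i != 0 -> t j != 0 -> lmP (t i) != lmP (t j).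
  move=> /andP [lt_ij _] /lm_t [? [? [? ->]]] /lm_t [? [? [? ->]]].
  by apply/eqP => [[_ _ _ eq_ij]]; rewrite eq_ij ltnn in lt_ij.
have [sum0|[k [_ tk_neq0 _ lm_f]]] := lm_sum_distinct (@lm_add_dominant_lmP R) distinct.
  by move: f_neq0; rewrite def_f sum0 eqxx.
have [c1 [c2 [c3 lm_tk]]] := lm_t k tk_neq0.
exists (nseq c1 (Xw1 R) ++ nseq c2 (Xw2 R) ++ nseq c3 (Xw3 R) ++ nseq k (Xwv R)).
split.
  have [S_w1 S_w2 S_w3 S_wv] := mem_generators.
  by rewrite !all_cat !all_nseq S_w1 S_w2 S_w3 S_wv !orbT.
by rewrite lm_basis_product lm_lmP def_f lm_f lm_tk.
Qed.

Theorem generated_translation_invariant f : translation_invariant f -> generated S f.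
Proof.
have [S_w1 S_w2 S_w3 S_wv] := mem_generators.
move=> /translation_invariant_expansion [N [F ->]].
apply: big_ind => [|x y|k _]; [exact: (generated_natr _ 0) | exact: gen_add |].
apply: gen_mul; first exact: generated_inclW.
exact/generated_expr/gen_elem.
Qed.

End TranslationInvariants.

Theorem mainTheorem2 (R : realFieldType) :
  sagbi_basis (@translation_invariant R) [:: Xw1 R; Xw2 R; Xw3 R; Xwv R] /\
  (forall f : P6 R, translation_invariant f -> generated [:: Xw1 R; Xw2 R; Xw3 R; Xwv R] f).
Proof.
split; [exact: sagbi_translation_invariant | exact: generated_translation_invariant].
Qed.
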